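(* Let $\delta\in(0,1)$, let $H$ be an $n$-vertex graph, let $C$ be a set of colours with $|C|\ge7\delta n$, and for every vertex $w$ let $C_w\subseteq C$, such that: (i) $d_H(w)\le|C|-|C_w|$ for every $w\in V(H)$; (ii) there is a set $U\subseteq V(H)$ with $|U|\le\delta n$ such that every edge of $H$ has an endpoint in $U$; (iii) $|C_w|\le\delta n$ for every $w\in V(H)$; (iv) for every $c\in C$, $|\{w\in V(H): c\in C_w\}|\le\delta n$. Then there is a proper edge-colouring $\phi:E(H)\to C$ such that every edge $uv\in E(H)$ satisfies $\phi(uv)\notin C_u\cup C_v$.
   Context: A proper edge-colouring of a graph assigns colours to edges so that edges sharing an endpoint receive different colours; $d_H(w)$ is the degree of $w$ in $H$. *)

From mathcomp Require Import all_boot all_order all_algebra.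
Set Implicit Arguments. Unset Strict Implicit. Unset Printing Implicit Defensive.
Import Order.TTheory GRing.Theory Num.Theory.

Definition simple_graph (V : finType) (e : rel V) : Prop :=
  symmetric e /\ irreflexive e.

Definition deg (V : finType) (e : rel V) (w : V) : nat := #|[set y | e w y]|.

Definition vertex_cover (V : finType) (e : rel V) (U : {set V}) : Prop :=
  forall x y, e x y -> (x \in U) || (y \in U).

(* An edge-colouring phi (given on ordered pairs, symmetric on edges) with
   colours in C that is proper and avoids the lists C_u, C_v. *)
Definition good_edge_colouring (V K : finType) (e : rel V) (C : {set K})
    (Cw : V -> {set K}) (phi : V -> V -> K) : Prop :=
  (forall x y, e x y -> phi x y = phi y x) /\
  (forall x y, e x y -> phi x y \in C) /\
  (forall x y z, e x y -> e x z -> y != z -> phi x y != phi x z) /\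
  (forall x y, e x y -> (phi x y \notin Cw x) && (phi x y \notin Cw y)).

From mathcomp Require Import all_boot all_order all_algebra.
Import Order.TTheory GRing.Theory Num.Theory.
From mathcomp Require Import zify lra.
Set Implicit Arguments. Unset Strict Implicit. Unset Printing Implicit Defensive.

(* The edges are coloured greedily, one cover vertex at a time: if all edges
   touching W (a subset of the cover U) are already coloured and u is a further
   vertex of U, the uncoloured edges uv must receive pairwise distinct colours
   that are free at u (not in C_u and not yet used at u) and not forbidden at
   v (not in C_v and not yet used at v).  This is a system of distinct
   representatives, found with Hall's theorem: each v forbids at most
   |C_v| + |W| free colours, each colour c is forbidden at most at
   |{w : c in C_w}| + |W| neighbours v, and the degree condition leaves at
   least as many free colours as uncoloured edges at u; the density hypotheses
   make the sum of the two forbidding counts smaller than the number of free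
   colours, which implies Hall's condition. *)

Lemma card_sub_setU (T : finType) (A B D : {set T}) :
  A \subset B :|: D -> #|A| <= #|B| + #|D|.
Proof. by move=> /subset_leq_card /leq_trans; apply; apply: leq_card_setU. Qed.

(* Matchings for a relation r between sources X and targets Y; the default
   target y0 only serves to make matchings total functions. *)
Section Hall.

Variables (X Y : finType) (y0 : Y).
Implicit Types (r : X -> Y -> bool) (A B S T : {set X}) (Ys : {set Y}).

Definition nbhd r S : {set Y} := [set y | [exists x in S, r x y]].

Definition hall_condition r A := forall S, S \subset A -> #|S| <= #|nbhd r S|.

Definition matching r A (f : X -> Y) :=
  {in A &, injective f} /\ {in A, forall x, r x (f x)}.

Definition avoiding r Ys x y := r x y && (y \notin Ys).

Lemma hall_condition_sub r A B : B \subset A -> hall_condition r A -> hall_condition r B.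
Proof. by move=> sBA hA S sSB; apply: hA; apply: subset_trans sSB sBA. Qed.

Lemma matching_glue r A S Ys f1 f2 :
  S \subset A -> matching r S f1 -> {in S, forall x, f1 x \in Ys} ->
  matching (avoiding r Ys) (A :\: S) f2 ->
  matching r A (fun x => if x \in S then f1 x else f2 x).
Proof.
move=> sSA [inj1 r1] f1Ys [inj2 r2].
have inAS x : x \in A -> x \notin S -> x \in A :\: S by rewrite inE => -> ->.
have f2Ys x : x \in A -> x \notin S -> f2 x \notin Ys.
  by move=> xA xS; case/andP: (r2 x (inAS x xA xS)).
split=> [x y xA yA /=|x xA /=].
  case: ifP => xS; case: ifP => yS.
  - exact: inj1.
  - by move=> fxy; move: (f2Ys y yA (negbT yS)); rewrite -fxy f1Ys.
  - by move=> fxy; move: (f2Ys x xA (negbT xS)); rewrite fxy f1Ys.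
  - by apply: inj2; rewrite inE ?xS ?yS.
case: ifP => xS; first exact: r1.
by case/andP: (r2 x (inAS x xA (negbT xS))).
Qed.

Lemma nbhd_setU r S T : nbhd r (S :|: T) = nbhd r S :|: nbhd r T.
Proof.
apply/setP=> y; rewrite !inE; apply/existsP/orP => [[x]|].
  rewrite inE => /andP [/orP [xS|xT] rxy]; [left|right];
  by apply/existsP; exists x; rewrite ?xS ?xT.
by case=> /existsP [x /andP [xST rxy]]; exists x; rewrite inE xST ?orbT rxy.
Qed.

Lemma nbhd_avoiding r S Ys : nbhd r S \subset Ys :|: nbhd (avoiding r Ys) S.
Proof.
apply/subsetP=> y; rewrite !inE => /existsP [x /andP [xS rxy]].
by case: (boolP (y \in Ys)) => //= yYs; apply/existsP; exists x; rewrite xS /avoiding rxy yYs.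
Qed.

Lemma hall_condition_tight r A S :
  S \subset A -> #|nbhd r S| <= #|S| -> hall_condition r A ->
  hall_condition (avoiding r (nbhd r S)) (A :\: S).
Proof.
move=> sSA tight hA T sT.
have dST : [disjoint S & T].
  by apply/pred0P => x /=; apply/andP => -[xS /(subsetP sT)]; rewrite inE xS.
have hST : #|S :|: T| <= #|nbhd r (S :|: T)|.
  by apply: hA; rewrite subUset sSA (subset_trans sT) ?subsetDl.
have nST : #|nbhd r (S :|: T)| <= #|nbhd r S| + #|nbhd (avoiding r (nbhd r S)) T|.
  apply: card_sub_setU; rewrite nbhd_setU.
  by rewrite -{2}(setUid (nbhd r S)) -setUA setUS ?nbhd_avoiding.
move: hST; rewrite cardsU (disjoint_setI0 dST) cards0; lia.
Qed.

Lemma hall_condition_surplus r B y :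
  (forall T, T \subset B -> T != set0 -> #|T| < #|nbhd r T|) ->
  hall_condition (avoiding r [set y]) B.
Proof.
move=> surplus T sTB; have [->|T0] := eqVneq T set0; first by rewrite cards0.
have := surplus T sTB T0; have := card_sub_setU (nbhd_avoiding r T [set y]).
rewrite cards1; lia.
Qed.

(* Hall's marriage theorem, by strong induction on |A|: either some nonempty
   proper S is tight and A splits into S and A \ S, or every nonempty proper
   subset has surplus and one source is matched to any neighbour. *)
Theorem hall r A : hall_condition r A -> exists f, matching r A f.
Proof.
move: {2}#|A| (leqnn #|A|) => k; elim: k r A => [|k IH] r A leAk hA.
  exists (fun=> y0); have -> : A = set0 by apply/eqP; rewrite -cards_eq0; lia.
  by split=> x; rewrite inE.
have [/existsP [S /and4P [sSA S0 SA tight]] | no_tight] :=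
  boolP [exists S : {set X}, [&& S \subset A, S != set0, S != A & #|nbhd r S| <= #|S|]].
  have ltSA : #|S| < #|A| by apply: proper_card; rewrite properEneq SA.
  have ltDA : #|A :\: S| < #|A|.
    by rewrite cardsDS //; move: S0; rewrite -card_gt0; have := subset_leq_card sSA; lia.
  have [f1 f1m] := IH r S (leq_trans ltSA leAk) (hall_condition_sub sSA hA).
  have [f2 f2m] := IH _ _ (leq_trans ltDA leAk) (hall_condition_tight sSA tight hA).
  have f1N x : x \in S -> f1 x \in nbhd r S.
    by move=> xS; rewrite inE; apply/existsP; exists x; rewrite xS (proj2 f1m).
  by exists (fun x => if x \in S then f1 x else f2 x); apply: matching_glue f1m f1N f2m.
have [A0|[x0 x0A]] := set_0Vmem A.
  by exists (fun=> y0); split=> x; rewrite A0 inE.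
have : 0 < #|nbhd r [set x0]| by apply: leq_trans (hA _ _); rewrite ?cards1 ?sub1set.
rewrite card_gt0 => /set0Pn [y /[!inE] /existsP [x /andP [/[!inE] /eqP -> rxy]]] {x}.
have surplus T : T \subset A :\ x0 -> T != set0 -> #|T| < #|nbhd r T|.
  move=> sT T0; rewrite ltnNge; apply: contra no_tight => le; apply/existsP; exists T.
  rewrite (subset_trans sT) ?subD1set // T0 le andbT /=.
  by apply/eqP => TA; move: (subsetP sT x0); rewrite TA x0A !inE eqxx => /(_ isT).
have ltA : #|A :\ x0| < #|A| by rewrite (cardsD1 x0 A) x0A.
have [f2 f2m] := IH _ _ (leq_trans ltA leAk) (hall_condition_surplus y surplus).
have f1m : matching r [set x0] (fun=> y).
  by split=> [x1 x2 /[!inE] /eqP -> /eqP ->|x1 /[!inE] /eqP ->].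
exists (fun x => if x \in [set x0] then y else f2 x); apply: matching_glue f1m _ f2m.
  by rewrite sub1set.
by move=> x1 _; rewrite inE.
Qed.

(* A Hall violator S would miss some slot y, which all of S forbids,
   while x in S forbids every slot outside the neighbourhood of S. *)
Lemma hall_condition_sparse A (P : {set Y}) (bad : X -> Y -> bool) :
  #|A| <= #|P| ->
  (forall x y, x \in A -> y \in P ->
     #|[set y' in P | bad x y']| + #|[set x' in A | bad x' y]| < #|P|) ->
  hall_condition (fun x y => (y \in P) && ~~ bad x y) A.
Proof.
move=> AP sparse S sSA; set r := fun x y => _; rewrite leqNgt; apply/negP => ltNS.
have [x xS] : {x | x \in S} by apply/sigW/set0Pn; rewrite -card_gt0; lia.
have /subsetPn [y yP yN] : ~~ (P \subset nbhd r S).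
  by apply/negP => /subset_leq_card; have := subset_leq_card sSA; lia.
have badx : #|P| <= #|[set y' in P | bad x y']| + #|nbhd r S|.
  apply: card_sub_setU; apply/subsetP => y' y'P; rewrite !inE y'P /=.
  by case: (boolP (bad x y')) => //= nb; apply/existsP; exists x; rewrite xS /r y'P nb.
have bady : #|S| <= #|[set x' in A | bad x' y]|.
  apply/subset_leq_card/subsetP => x' x'S; rewrite inE (subsetP sSA _ x'S) /=.
  apply: contraR yN => nb; rewrite inE; apply/existsP; exists x'; by rewrite x'S /r yP nb.
by have := sparse x y (subsetP sSA _ xS) yP; lia.
Qed.

End Hall.

Definition edges_at (V : finType) (e : rel V) (W : {set V}) : rel V :=
  fun x y => e x y && ((x \in W) || (y \in W)).

Definition holders (V K : finType) (Cw : V -> {set K}) (c : K) : {set V} :=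
  [set w | c \in Cw w].

Lemma edges_at_sym (V : finType) (e : rel V) (W : {set V}) :
  symmetric e -> symmetric (edges_at e W).
Proof. by move=> e_sym x y; rewrite /edges_at e_sym orbC. Qed.

Section Extension.

Variables (V K : finType) (e : rel V) (C : {set K}) (Cw : V -> {set K}).
Hypothesis e_simple : simple_graph e.
Variables (W : {set V}) (u : V) (phi : V -> V -> K).
Hypothesis uW : u \notin W.
Hypothesis phi_good : good_edge_colouring (edges_at e W) C Cw phi.

Definition used x : {set K} := phi x @: [set w in W | e x w].
Definition new_nbrs : {set V} := [set v | e u v && (v \notin W)].
Definition free : {set K} := C :\: (Cw u :|: used u).
Definition forbidden v c := (c \in Cw v) || (c \in used v).
Definition new_edge x y := (x == u) && (y \in new_nbrs).
Definition extend (f : V -> K) x y :=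
  if new_edge x y then f y else if new_edge y x then f x else phi x y.

(* Each edge to W contributes at most one used colour. *)
Lemma card_used x : #|used x| <= #|W|.
Proof.
apply: leq_trans (leq_imset_card _ _) _; apply: subset_leq_card.
by apply/subsetP => w; rewrite inE => /andP [].
Qed.

Lemma used_colour x y : x \notin W -> edges_at e W x y -> phi x y \in used x.
Proof.
move=> xW /andP [exy]; rewrite (negbTE xW) /= => yW.
by apply/imsetP; exists y; rewrite // inE yW exy.
Qed.

(* Since phi is proper at each vertex of W, a colour is used at no more
   vertices than |W|. *)
Lemma card_users c : #|[set v | c \in used v]| <= #|W|.
Proof.
have [phi_sym [_ [phi_proper _]]] := phi_good.
pose g v := odflt u [pick w in W | e v w && (phi v w == c)].
have gP v : c \in used v -> [/\ g v \in W, e v (g v) & phi v (g v) = c].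
  case/imsetP => w /[!inE] /andP [wW evw] cE; rewrite /g.
  case: pickP => [w' /and3P [w'W evw' /eqP] //|/(_ w)].
  by rewrite wW evw -cE eqxx.
have g_inj : {in [set v | c \in used v] &, injective g}.
  move=> v1 v2 /[!inE] /gP [wW e1 c1] /gP [_ e2 c2] gE; apply/eqP/negPn/negP => ne.
  rewrite -gE in e2 c2.
  have E1 : edges_at e W (g v1) v1 by rewrite /edges_at (proj1 e_simple) e1 wW.
  have E2 : edges_at e W (g v1) v2 by rewrite /edges_at (proj1 e_simple) e2 wW.
  by have := phi_proper _ _ _ E1 E2 ne; rewrite (phi_sym _ _ E1) (phi_sym _ _ E2) c1 c2 eqxx.
rewrite -(card_in_imset g_inj); apply/subset_leq_card/subsetP => w.
by case/imsetP => v /[!inE] /gP [wW _ _] ->.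
Qed.

Lemma card_free : #|C| <= #|free| + #|Cw u| + #|used u|.
Proof.
have : #|C| <= #|free| + #|Cw u :|: used u|.
  by apply/card_sub_setU/subsetP => c cC; rewrite in_setU in_setD cC andbT orNb.
by have := card_sub_setU (subxx (Cw u :|: used u)); lia.
Qed.

Lemma card_new_nbrs :
  Cw u \subset C -> deg e u <= #|C| - #|Cw u| -> #|new_nbrs| <= #|free|.
Proof.
move=> Cw_sub deg_u; pose old_nbrs := [set w in W | e u w].
have disjoint_nbrs : [disjoint new_nbrs & old_nbrs].
  by apply/pred0P => y /=; rewrite !inE; case: (y \in W); rewrite ?andbF.
have : #|new_nbrs :|: old_nbrs| <= deg e u.
  by apply/subset_leq_card/subsetP => y; rewrite !inE => /orP [] /andP [].
rewrite cardsU (disjoint_setI0 disjoint_nbrs) cards0 subn0.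
have : #|used u| <= #|old_nbrs| by apply: leq_imset_card.
by have := subset_leq_card Cw_sub; have := card_free; lia.
Qed.

Lemma forbidden_sparse :
  (forall v c, c \in C ->
     #|Cw u| + #|Cw v| + #|holders Cw c| + 3 * #|W| < #|C|) ->
  forall v c, v \in new_nbrs -> c \in free ->
    #|[set c' in free | forbidden v c']| + #|[set v' in new_nbrs | forbidden v' c]|
      < #|free|.
Proof.
move=> room v c _ c_free.
have cC : c \in C by move: c_free; rewrite inE => /andP [].
have bad_colours : #|[set c' in free | forbidden v c']| <= #|Cw v| + #|W|.
  apply: leq_trans (leq_add (leqnn _) (card_used v)).
  by apply/card_sub_setU/subsetP => c'; rewrite !inE => /andP [].
have bad_vertices :
    #|[set v' in new_nbrs | forbidden v' c]| <= #|holders Cw c| + #|W|.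
  apply: leq_trans (leq_add (leqnn _) (card_users c)).
  by apply/card_sub_setU/subsetP => v'; rewrite !inE => /andP [].
by have := room v c cC; have := card_free; have := card_used u; lia.
Qed.

Lemma u_not_new : u \notin new_nbrs.
Proof. by rewrite inE (proj2 e_simple). Qed.

Lemma edges_at_setU1 x y : edges_at e (u |: W) x y ->
  [|| new_edge x y, new_edge y x | edges_at e W x y].
Proof.
move=> /andP [exy]; rewrite !in_setU1 => /orP [/orP [/eqP xu|xW] | /orP [/eqP yu|yW]].
- subst x; case yW: (y \in W); first by rewrite /edges_at exy yW !orbT.
  by rewrite /new_edge eqxx inE exy yW.
- by rewrite /edges_at exy xW !orbT.
- subst y; case xW: (x \in W); first by rewrite /edges_at exy xW !orbT.
  by rewrite /new_edge eqxx !inE (proj1 e_simple u x) exy xW orbT.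
- by rewrite /edges_at exy yW !orbT.
Qed.

(* The unoriented version of new_edge; both endpoints of a new edge lie
   outside W, so new edges are not old. *)
Definition is_new x y := new_edge x y || new_edge y x.

Lemma is_new_notin x y : is_new x y -> x \notin W.
Proof. by case/orP => /andP [] => [/eqP -> | _ /[!inE] /andP []]. Qed.

Lemma is_new_not_old x y : is_new x y -> ~~ edges_at e W x y.
Proof.
move=> nxy; have nyx : is_new y x by rewrite /is_new orbC.
by rewrite /edges_at (negbTE (is_new_notin nxy)) (negbTE (is_new_notin nyx)) andbF.
Qed.

Section ExtendByMatching.

Variable (f : V -> K).
Hypothesis f_match :
  matching (fun v c => (c \in free) && ~~ forbidden v c) new_nbrs f.

Lemma extend_new x y : new_edge x y -> extend f x y = f y /\ extend f y x = f y.
Proof.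
move=> nxy; have nyx : new_edge y x = false.
  by case/andP: nxy => /eqP -> _; rewrite /new_edge (negbTE u_not_new) andbF.
by rewrite /extend nxy nyx.
Qed.

Lemma new_edge_colour x y : new_edge x y ->
  [/\ f y \in C, f y \notin Cw x, f y \notin Cw y, f y \notin used x & f y \notin used y].
Proof.
case/andP => /eqP -> yN; have /andP [] := proj2 f_match y yN.
rewrite /free /forbidden !inE negb_or.
by move=> /andP [/andP [nCu nUu] cC] /norP [nCy nUy].
Qed.

Lemma is_new_colour x y : is_new x y ->
  [/\ extend f x y = extend f y x, extend f x y \in C,
      extend f x y \notin Cw x, extend f x y \notin Cw y & extend f x y \notin used x].
Proof.
case/orP => [nxy|nyx].
  by have [-> ->] := extend_new nxy; have [] := new_edge_colour nxy.
by have [-> ->] := extend_new nyx; have [] := new_edge_colour nyx.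
Qed.

(* Two new edges at one vertex x share the vertex u, so x = u and the
   matching f gives them distinct colours. *)
Lemma new_colours_distinct x y z :
  is_new x y -> is_new x z -> y != z -> extend f x y != extend f x z.
Proof.
have not_into_u x' : new_edge x' u = false by rewrite /new_edge (negbTE u_not_new) andbF.
case: (eqVneq x u) => [->|xu].
  rewrite /is_new !not_into_u !orbF => nuy nuz yz.
  have [-> _] := extend_new nuy; have [-> _] := extend_new nuz.
  apply: contra yz => /eqP fyz; apply/eqP; apply: (proj1 f_match) fyz.
    by case/andP: nuy.
  by case/andP: nuz.
rewrite /is_new /new_edge (negbTE xu) /= => /andP [/eqP -> _] /andP [/eqP -> _].
by rewrite eqxx.
Qed.

Lemma extend_old x y : edges_at e W x y -> extend f x y = phi x y.
Proof.
move=> old; have /norP [nxy nyx] : ~~ is_new x y.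
  by apply: contraL old; apply: is_new_not_old.
by rewrite /extend (negbTE nxy) (negbTE nyx).
Qed.

(* The extended colouring is good: old edges keep phi, new colours are
   distinct, and new colours at x are fresh while old ones are used at x. *)
Lemma extend_good : good_edge_colouring (edges_at e (u |: W)) C Cw (extend f).
Proof.
have [phi_sym [phi_C [phi_proper phi_avoid]]] := phi_good.
have cases x y : edges_at e (u |: W) x y -> is_new x y || edges_at e W x y.
  by move/edges_at_setU1; rewrite /is_new orbA.
split; [|split; [|split]].
- move=> x y /cases /orP [nxy|oxy]; first by case: (is_new_colour nxy).
  have oyx := oxy; rewrite edges_at_sym in oyx; last exact: (proj1 e_simple).
  by rewrite !extend_old // phi_sym.
- move=> x y /cases /orP [nxy|oxy]; first by case: (is_new_colour nxy).
  by rewrite extend_old // phi_C.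
- move=> x y z /cases /orP [nxy|oxy] /cases /orP [nxz|oxz] yz.
  + exact: new_colours_distinct.
  + have [_ _ _ _ fresh] := is_new_colour nxy; rewrite (extend_old oxz).
    by apply: contraNneq fresh => ->; apply: used_colour (is_new_notin nxy) oxz.
  + have [_ _ _ _ fresh] := is_new_colour nxz; rewrite (extend_old oxy).
    by apply: contraNneq fresh => <-; apply: used_colour (is_new_notin nxz) oxy.
  + by rewrite !extend_old //; apply: phi_proper.
- move=> x y /cases /orP [nxy|oxy]; first by case: (is_new_colour nxy) => _ _ -> ->.
  by rewrite extend_old // phi_avoid.
Qed.

End ExtendByMatching.

Lemma extension_exists (k0 : K) :
  Cw u \subset C -> deg e u <= #|C| - #|Cw u| ->
  (forall v c, c \in C -> #|Cw u| + #|Cw v| + #|holders Cw c| + 3 * #|W| < #|C|) ->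
  exists phi', good_edge_colouring (edges_at e (u |: W)) C Cw phi'.
Proof.
move=> Cw_sub deg_u room.
have [f f_match] := hall k0 (hall_condition_sparse (card_new_nbrs Cw_sub deg_u)
                                                   (forbidden_sparse room)).
by exists (extend f); apply: extend_good.
Qed.

End Extension.

Section CoverColouring.

Variables (V K : finType) (e : rel V) (C : {set K}) (Cw : V -> {set K}).
Variables (U : {set V}) (k0 : K).
Hypothesis e_simple : simple_graph e.
Hypothesis Cw_sub : forall w, Cw w \subset C.
Hypothesis deg_bound : forall w, deg e w <= #|C| - #|Cw w|.
Hypothesis room : forall u v c, c \in C ->
  #|Cw u| + #|Cw v| + #|holders Cw c| + 3 * #|U| < #|C| + 3.

Lemma colouring_on_subsets (W : {set V}) :
  W \subset U -> exists phi, good_edge_colouring (edges_at e W) C Cw phi.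
Proof.
move: {2}#|W| (erefl #|W|) => k; elim: k W => [|k IH] W cardW sWU.
  exists (fun _ _ => k0); have -> : W = set0 by apply/eqP; rewrite -cards_eq0 cardW.
  by split; [|split; [|split]] => x y; rewrite /edges_at !inE andbF.
have [u uW] : {u | u \in W} by apply/sigW/set0Pn; rewrite -card_gt0 cardW.
have cardW' : #|W :\ u| = k by move: cardW; rewrite (cardsD1 u) uW => -[].
have [phi phi_good] := IH _ cardW' (subset_trans (subD1set W u) sWU).
rewrite -(setD1K uW); apply: (extension_exists e_simple _ phi_good k0) => //.
  by rewrite !inE eqxx.
move=> v c cC; have := room u v cC; have := subset_leq_card sWU.
by rewrite (cardsD1 u W) uW cardW'; lia.
Qed.

End CoverColouring.

Lemma good_edge_colouring_cover (V K : finType) (e : rel V) (C : {set K})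
    (Cw : V -> {set K}) (U : {set V}) (phi : V -> V -> K) :
  vertex_cover e U -> good_edge_colouring (edges_at e U) C Cw phi ->
  good_edge_colouring e C Cw phi.
Proof.
move=> cover [phi_sym [phi_C [phi_proper phi_avoid]]].
have E x y : edges_at e U x y = e x y.
  by rewrite /edges_at; case exy: (e x y) => //=; apply: cover.
split; [|split; [|split]] => [x y|x y|x y z|x y]; rewrite -!E.
- exact: phi_sym.
- exact: phi_C.
- exact: phi_proper.
- exact: phi_avoid.
Qed.

Local Open Scope ring_scope.

Section Density.

Variables (R : realFieldType) (delta : R) (n c : nat).
Hypothesis delta_gt0 : 0 < delta.
Hypothesis colours_many : 7%:R * delta * n%:R <= c%:R.

Lemma room_of_density a b h m :
  a%:R <= delta * n%:R -> b%:R <= delta * n%:R -> h%:R <= delta * n%:R ->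
  m%:R <= delta * n%:R -> (a + b + h + 3 * m < c + 3)%N.
Proof.
move=> ha hb hh hm; rewrite -(ltr_nat R) !natrD.
have D_ge0 : 0 <= delta * n%:R by rewrite mulr_ge0 ?ler0n ?ltW.
move: colours_many; rewrite -mulrA; lra.
Qed.

Lemma colours_nonempty : (0 < n)%N -> (0 < c)%N.
Proof.
rewrite -!(ltr_nat R) => n_gt0; have := mulr_gt0 delta_gt0 n_gt0.
move: colours_many; rewrite -mulrA; lra.
Qed.

End Density.

Theorem lemma9 (R : realFieldType) (delta : R) (V K : finType) (e : rel V)
    (C : {set K}) (Cw : V -> {set K}) :
  0 < delta < 1 ->
  simple_graph e ->
  7%:R * delta * #|V|%:R <= #|C|%:R ->
  (forall w, Cw w \subset C) ->
  (forall w, (deg e w <= #|C| - #|Cw w|)%N) ->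
  (exists U : {set V}, #|U|%:R <= delta * #|V|%:R /\ vertex_cover e U) ->
  (forall w, #|Cw w|%:R <= delta * #|V|%:R) ->
  (forall c, c \in C -> #|[set w | c \in Cw w]|%:R <= delta * #|V|%:R) ->
  exists phi : V -> V -> K, good_edge_colouring e C Cw phi.
Proof.
move=> /andP [delta_gt0 _] e_simple C_big Cw_sub deg_bound [U [U_small U_cover]]
  Cw_small holders_small.
(* Without colours there are no vertices, and the colouring is vacuous. *)
have [C0|[k0 _]] := set_0Vmem C.
  have noV (x : V) : False.
    have : (0 < #|C|)%N.
      by apply: colours_nonempty delta_gt0 C_big _; apply/card_gt0P; exists x.
    by rewrite C0 cards0.
  by exists (fun x => match noV x with end).
have room u v c : c \in C ->
    (#|Cw u| + #|Cw v| + #|holders Cw c| + 3 * #|U| < #|C| + 3)%N.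
  move=> cC; exact: (room_of_density delta_gt0 C_big (Cw_small u) (Cw_small v)
                                     (holders_small c cC) U_small).
have [phi phi_good] := colouring_on_subsets k0 e_simple Cw_sub deg_bound room (subxx U).
by exists phi; apply: good_edge_colouring_cover U_cover phi_good.
Qed.
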